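(* For every $t > 0$, at least one node is active throughout $[\max\{0, t-2D\}, t+D]$.
   Context: Consider an asynchronous message-passing system whose composition changes over time. An adversary generates, for each node $p$, at most one Enter($p$), at most one Leave($p$) and at most one Crash($p$) signal (a Leave($p$) signal for a crashed node $p$ may be generated at another active node; such forced leaves also count as leaves). A node is present at time $t$ if it has entered but not left by time $t$; $N(t)$ denotes the number of nodes present at time $t$, and $N(t) \geq N_{min}$ for all $t$. A node is active at time $t$ if it is present at time $t$ and has not crashed by time $t$. $D$ is an upper bound (unknown to the nodes) on message delay. Churn assumption: there is a constant $\alpha < 1$ such that for every time $t$, the total number of nodes that enter or leave during $[t, t+D]$ is at most $\alpha N(t)$. Failure assumption: there is a constant $\Delta < 1$ such that at any time $t$, at most $\Delta N(t)$ of the nodes present at time $t$ have crashed. Assume moreover $\alpha \leq 1 - 2^{-1/4}$ and $1 < ((1-\alpha)^3 - \Delta(1+\alpha)^3) N_{min}$. *)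

From Stdlib Require Import Reals List.
Open Scope R_scope.

Section Model.
Context {Node : Type}.
(* init p : p belongs to the initial set S_0 (present at time 0 without an Enter).
   enter p / leave p / crash p : time of the (unique, if any) Enter(p) /
   Leave(p) / Crash(p) signal; None = no such signal ever. *)
Variables (init : Node -> Prop) (enter leave crash : Node -> option R).

Definition entered_by (p : Node) (t : R) : Prop :=
  init p \/ exists e, enter p = Some e /\ e <= t.
Definition left_by (p : Node) (t : R) : Prop :=
  exists l, leave p = Some l /\ l <= t.
Definition crashed_by (p : Node) (t : R) : Prop :=
  exists c, crash p = Some c /\ c <= t.
Definition present (p : Node) (t : R) : Prop :=
  entered_by p t /\ ~ left_by p t.
Definition active (p : Node) (t : R) : Prop :=
  present p t /\ ~ crashed_by p t.
Definition enters_during (p : Node) (a b : R) : Prop :=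
  exists e, enter p = Some e /\ a <= e <= b.
Definition leaves_during (p : Node) (a b : R) : Prop :=
  exists l, leave p = Some l /\ a <= l <= b.
End Model.

Definition is_card {A : Type} (P : A -> Prop) (n : nat) : Prop :=
  exists l : list A, NoDup l /\ (forall x, In x l <-> P x) /\ length l = n.

(* Let T0 = max(0, t - 2D); then [T0, t + D] lies within the three windows of
   length D starting at T0.  In a window [a, s] with s <= a + D, the nodes present
   at a but not at s (call them L) left during it and those present at s but not
   at a entered during it, so the churn bound gives N(s) + 2|L| <= (1 + alpha) N(a).
   Hence if R is a set of nodes present at a and R' the part of it still present
   at s, then for 1/2 <= beta <= 1
     |R| - (1 - beta (1 - alpha)) N(a) <= |R'| - (1 - beta) N(s).
   Chaining this over the three windows with beta = (1-alpha)^2, 1-alpha, 1 (this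
   is where (1-alpha)^2 >= 1/2, a consequence of alpha <= 1 - 2^(-1/4), is needed)
   leaves at least (1-alpha)^3 N(T0) nodes present throughout [T0, T0 + 3D].
   Since N(t + D) <= (1+alpha)^3 N(T0), at most Delta (1+alpha)^3 N(T0) of them
   have crashed by t + D, and the hypothesis on N_min leaves one that is active
   throughout. *)
From Stdlib Require Import Reals List.
From Stdlib Require Import Lra Psatz ClassicalEpsilon.
Open Scope R_scope.

Definition filterP {A : Type} (P : A -> Prop) (l : list A) : list A :=
  filter (fun x => if excluded_middle_informative (P x) then true else false) l.

Lemma filterP_In {A : Type} (P : A -> Prop) l x : In x (filterP P l) <-> In x l /\ P x.
Proof.
  unfold filterP. rewrite filter_In.
  destruct (excluded_middle_informative (P x)); intuition congruence.
Qed.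

Lemma filterP_length {A : Type} (P : A -> Prop) l :
  length l = (length (filterP P l) + length (filterP (fun x => ~ P x) l))%nat.
Proof.
  induction l as [|a l IH]; simpl; auto.
  unfold filterP in *; simpl.
  destruct (excluded_middle_informative (P a));
  destruct (excluded_middle_informative (~ P a)); try tauto; simpl; lia.
Qed.

Lemma is_card_length_le {A : Type} (P : A -> Prop) n l :
  is_card P n -> NoDup l -> (forall x, In x l -> P x) -> INR (length l) <= INR n.
Proof.
  intros [l' [_ [Hl' <-]]] Hl HP. apply le_INR, NoDup_incl_length; auto.
  intros x Hx. apply Hl', HP, Hx.
Qed.

Section Presence.
Context {Node : Type} (init : Node -> Prop) (enter leave crash : Node -> option R).
Local Notation present := (present init enter leave).

Lemma entered_by_mono p a b : entered_by init enter p a -> a <= b -> entered_by init enter p b.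
Proof.
  intros [Hi|[e [He Hea]]] Hab; [left; exact Hi|right; exists e; split; auto; lra].
Qed.

Lemma left_by_mono p a b : left_by leave p a -> a <= b -> left_by leave p b.
Proof. intros [l [Hl Hla]] Hab. exists l; split; auto; lra. Qed.

Lemma crashed_by_mono p a b : crashed_by crash p a -> a <= b -> crashed_by crash p b.
Proof. intros [c [Hc Hca]] Hab. exists c; split; auto; lra. Qed.

Lemma present_between p a b c :
  present p a -> present p c -> a <= b <= c -> present p b.
Proof.
  intros [Hen _] [_ Hnl] Hb. split.
  - apply (entered_by_mono p a); [exact Hen|lra].
  - intros Hl. apply Hnl, (left_by_mono p b); [exact Hl|lra].
Qed.

Lemma leaves_during_of_present p a s :
  present p a -> ~ present p s -> a <= s -> leaves_during leave p a s.
Proof.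
  intros [Hen Hnl] Hns Has.
  destruct (classic (left_by leave p s)) as [[l [Hl Hls]]|Hnls].
  - exists l; split; auto. split; [|exact Hls].
    destruct (Rle_dec l a) as [Hla|Hla]; [|lra].
    exfalso; apply Hnl; exists l; auto.
  - exfalso; apply Hns; split; [apply (entered_by_mono p a)|]; auto.
Qed.

Lemma enters_during_of_present p a s :
  present p s -> ~ present p a -> a <= s -> enters_during enter p a s.
Proof.
  intros [Hen Hnl] Hna Has.
  assert (Hnla : ~ left_by leave p a) by (intros Hl; apply Hnl, (left_by_mono p a); auto).
  destruct Hen as [Hi|[e [He Hes]]].
  - exfalso; apply Hna; split; [left; exact Hi|exact Hnla].
  - exists e; split; auto. split; [|exact Hes].
    destruct (Rle_dec e a) as [Hea|Hea]; [|lra].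
    exfalso; apply Hna; split; [right; exists e; auto|exact Hnla].
Qed.

Lemma active_between p a c :
  present p a -> present p c -> ~ crashed_by crash p c ->
  forall s, a <= s <= c -> active init enter leave crash p s.
Proof.
  intros Ha Hc Hnc s Hs. split.
  - exact (present_between p a s c Ha Hc Hs).
  - intros Hcr. apply Hnc, (crashed_by_mono p s); [exact Hcr|lra].
Qed.

Lemma exists_uncrashed (N : R -> nat) (Delta t : R) (l : list Node) :
  (forall l : list Node, NoDup l ->
     (forall p, In p l -> present p t /\ crashed_by crash p t) ->
     INR (length l) <= Delta * INR (N t)) ->
  NoDup l -> (forall p, In p l -> present p t) -> Delta * INR (N t) < INR (length l) ->
  exists p, In p l /\ ~ crashed_by crash p t.
Proof.
  intros Hfail Hl Hpresent Hlt.
  apply NNPP; intros Hall.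
  assert (Hcrashed : forall p, In p l -> present p t /\ crashed_by crash p t).
  { intros p Hp. split; [exact (Hpresent p Hp)|].
    apply NNPP; intros Hnc. apply Hall. exists p; auto. }
  pose proof (Hfail l Hl Hcrashed). lra.
Qed.

End Presence.

Lemma pow_antimono_le1 (x : R) (j n : nat) : 0 <= x <= 1 -> (j <= n)%nat -> x ^ n <= x ^ j.
Proof.
  intros Hx Hjn. replace n with (j + (n - j))%nat by lia. rewrite pow_add.
  assert (x ^ (n - j) <= 1) by (rewrite <- (pow1 (n - j)); apply pow_incr; lra).
  pose proof (pow_le x j ltac:(lra)). nra.
Qed.

Lemma half_le_pow4 (x : R) : Rpower 2 (- (1/4)) <= x -> 1/2 <= x ^ 4.
Proof.
  intros Hx.
  assert (Hy0 : 0 < Rpower 2 (- (1/4))) by apply exp_pos.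
  replace (1/2) with (Rpower 2 (- (1/4)) ^ 4).
  - apply pow_incr; lra.
  - rewrite <- Rpower_pow, Rpower_mult by exact Hy0.
    replace (- (1/4) * INR 4) with (- (1)) by (simpl; lra).
    rewrite Rpower_Ropp, Rpower_1; lra.
Qed.

Lemma potential_step (alpha beta r a n n' : R) :
  1/2 <= beta <= 1 -> a <= alpha * n -> n' + 2 * a <= (1 + alpha) * n ->
  r - (1 - beta * (1 - alpha)) * n <= (r - a) - (1 - beta) * n'.
Proof.
  intros Hb Ha Hn'.
  (* the gap is (1-beta)((1+alpha) n - 2a - n') + (2 beta - 1)(alpha n - a) *)
  assert (0 <= (1 - beta) * ((1 + alpha) * n - 2 * a - n')) by (apply Rmult_le_pos; lra).
  assert (0 <= (2 * beta - 1) * (alpha * n - a)) by (apply Rmult_le_pos; lra).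
  lra.
Qed.

Section Churn.
Variables (Node : Type) (init : Node -> Prop) (enter leave : Node -> option R)
  (N : R -> nat) (D alpha : R).
Local Notation present := (present init enter leave).
Hypothesis HD : 0 <= D.
Hypotheses (Halpha0 : 0 <= alpha) (Halpha1 : alpha <= 1).
Hypothesis HN : forall t, 0 <= t -> is_card (fun p => present p t) (N t).
Hypothesis Hchurn : forall t, 0 <= t ->
     forall l1 l2 : list Node, NoDup l1 -> NoDup l2 ->
     (forall p, In p l1 -> enters_during enter p t (t + D)) ->
     (forall p, In p l2 -> leaves_during leave p t (t + D)) ->
     INR (length l1 + length l2) <= alpha * INR (N t).

Section Window.
Variables (a s : R) (L : list Node).
Hypotheses (Ha : 0 <= a) (Has : a <= s) (Hsa : s <= a + D).
Hypothesis HL : NoDup L.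
Hypothesis HL_departed : forall p, In p L -> present p a /\ ~ present p s.

Lemma leaves_window p : In p L -> leaves_during leave p a (a + D).
Proof.
  intros Hp. destruct (HL_departed p Hp) as [Hpa Hps].
  destruct (leaves_during_of_present init enter leave p a s) as [l [Hl Hls]]; auto.
  exists l; split; auto; lra.
Qed.

Lemma departures_bound : INR (length L) <= alpha * INR (N a).
Proof.
  apply (Hchurn a Ha nil L); [constructor|exact HL|intros p []|exact leaves_window].
Qed.

Lemma window_population : INR (N s) + 2 * INR (length L) <= (1 + alpha) * INR (N a).
Proof.
  destruct (HN s ltac:(lra)) as [Ps [HPs [HPs_in HPs_len]]].
  set (arrived := filterP (fun p => ~ present p a) Ps).
  set (stayed := filterP (fun p => present p a) Ps).
  assert (Hsplit : N s = (length stayed + length arrived)%nat)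
    by (rewrite <- HPs_len; apply filterP_length).
  assert (Hstayed : INR (length (stayed ++ L)) <= INR (N a)).
  { apply (is_card_length_le _ _ _ (HN a Ha)).
    - apply NoDup_app; [apply NoDup_filter, HPs|exact HL|].
      intros p Hp HpL. apply filterP_In in Hp as [Hp _].
      apply HPs_in in Hp. exact (proj2 (HL_departed p HpL) Hp).
    - intros p Hp. apply in_app_or in Hp as [Hp|Hp].
      + exact (proj2 (proj1 (filterP_In _ _ _) Hp)).
      + exact (proj1 (HL_departed p Hp)). }
  assert (Hchurn_a : INR (length arrived + length L) <= alpha * INR (N a)).
  { apply (Hchurn a Ha).
    - apply NoDup_filter, HPs.
    - exact HL.
    - intros p Hp. apply filterP_In in Hp as [Hp Hpa]. apply HPs_in in Hp.
      destruct (enters_during_of_present init enter leave p a s) as [e [He Hes]]; auto.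
      exists e; split; auto; lra.
    - exact leaves_window. }
  rewrite Hsplit. rewrite length_app, plus_INR in Hstayed.
  rewrite plus_INR in Hchurn_a |- *. lra.
Qed.

End Window.

Lemma population_window a s :
  0 <= a -> a <= s <= a + D -> INR (N s) <= (1 + alpha) * INR (N a).
Proof.
  intros Ha Hs.
  pose proof (window_population a s nil Ha ltac:(lra) ltac:(lra) (NoDup_nil _)
                ltac:(intros p [])) as H.
  simpl in H. lra.
Qed.

Lemma population_growth (m : nat) : forall a s,
  0 <= a -> a <= s <= a + INR m * D -> INR (N s) <= (1 + alpha) ^ m * INR (N a).
Proof.
  induction m as [|m IH]; intros a s Ha Hs.
  - simpl in *. replace s with a by lra. lra.
  - rewrite S_INR in Hs.
    assert (HNa : 0 <= INR (N a)) by apply pos_INR.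
    assert (Hpow : 1 <= (1 + alpha) ^ m) by (apply pow_R1_Rle; lra).
    destruct (Rle_dec s (a + D)) as [Hs1|Hs1].
    + pose proof (population_window a s Ha ltac:(lra)).
      assert (0 <= ((1 + alpha) ^ m - 1) * ((1 + alpha) * INR (N a)))
        by (apply Rmult_le_pos; nra).
      simpl. lra.
    + pose proof (IH (a + D) s ltac:(lra) ltac:(lra)).
      pose proof (population_window a (a + D) Ha ltac:(lra)).
      assert (0 <= (1 + alpha) ^ m) by lra.
      assert ((1 + alpha) ^ m * INR (N (a + D)) <= (1 + alpha) ^ m * ((1 + alpha) * INR (N a)))
        by (apply Rmult_le_compat_l; lra).
      simpl. lra.
Qed.

Lemma survivors_window a s (R : list Node) beta :
  0 <= a -> a <= s <= a + D -> NoDup R -> (forall p, In p R -> present p a) ->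
  1/2 <= beta <= 1 ->
  INR (length R) - (1 - beta * (1 - alpha)) * INR (N a)
  <= INR (length (filterP (fun p => present p s) R)) - (1 - beta) * INR (N s).
Proof.
  intros Ha Hs HR HRa Hbeta.
  set (L := filterP (fun p => ~ present p s) R).
  assert (HNoDupL : NoDup L) by apply NoDup_filter, HR.
  assert (HL : forall p, In p L -> present p a /\ ~ present p s).
  { intros p Hp. apply filterP_In in Hp as [Hp Hps]. auto. }
  rewrite (filterP_length (fun p => present p s) R), plus_INR.
  fold L.
  pose proof (departures_bound a s L Ha ltac:(lra) ltac:(lra) HNoDupL HL).
  pose proof (window_population a s L Ha ltac:(lra) ltac:(lra) HNoDupL HL).
  pose proof (potential_step alpha beta
                (INR (length (filterP (fun p => present p s) R)) + INR (length L))
                (INR (length L)) (INR (N a)) (INR (N s))).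
  lra.
Qed.

Lemma survivors_bound (m : nat) : forall a (R : list Node) beta,
  0 <= a -> NoDup R -> (forall p, In p R -> present p a) -> beta <= 1 ->
  (forall j, (j < m)%nat -> 1/2 <= beta * (1 - alpha) ^ j) ->
  exists l, NoDup l /\ (forall p, In p l -> In p R /\ present p (a + INR m * D)) /\
    INR (length R) - (1 - beta * (1 - alpha) ^ m) * INR (N a)
    <= INR (length l) - (1 - beta) * INR (N (a + INR m * D)).
Proof.
  induction m as [|m IH]; intros a R beta Ha HR HRa Hbeta Hhalf.
  - replace (a + INR 0 * D) with a by (simpl; ring).
    exists R. split; [exact HR|split].
    + intros p Hp. auto.
    + simpl. lra.
  - assert (Hm : 0 <= (1 - alpha) ^ m) by (apply pow_le; lra).
    assert (Hb : 1/2 <= beta) by (pose proof (Hhalf 0%nat ltac:(lia)); simpl in *; lra).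
    destruct (IH a R (beta * (1 - alpha)) Ha HR HRa ltac:(nra)) as [l [Hl [HlR Hbound]]].
    { intros j Hj. rewrite Rmult_assoc, tech_pow_Rmult. apply Hhalf. lia. }
    set (b := a + INR m * D).
    pose proof (survivors_window b (b + D) l beta ltac:(subst b; pose proof (pos_INR m); nra)
                  ltac:(lra) Hl (fun p Hp => proj2 (HlR p Hp)) ltac:(lra)).
    replace (a + INR (S m) * D) with (b + D) by (subst b; rewrite S_INR; ring).
    exists (filterP (fun p => present p (b + D)) l). split; [|split].
    + apply NoDup_filter, Hl.
    + intros p Hp. apply filterP_In in Hp as [Hp Hpb]. split; [apply HlR, Hp|exact Hpb].
    + rewrite <- tech_pow_Rmult, <- Rmult_assoc. fold b in Hbound. lra.
Qed.

Lemma long_lived_nodes (m : nat) a :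
  0 <= a -> (forall j, (j < m)%nat -> 1/2 <= (1 - alpha) ^ j) ->
  exists l, NoDup l /\ (forall p, In p l -> present p a /\ present p (a + INR m * D)) /\
    (1 - alpha) ^ m * INR (N a) <= INR (length l).
Proof.
  intros Ha Hhalf.
  destruct (HN a Ha) as [P [HP [HP_in HP_len]]].
  destruct (survivors_bound m a P 1 Ha HP (fun p Hp => proj1 (HP_in p) Hp) ltac:(lra))
    as [l [Hl [HlP Hcount]]].
  { intros j Hj. rewrite Rmult_1_l. auto. }
  exists l. split; [exact Hl|split].
  - intros p Hp. destruct (HlP p Hp) as [HpP Hpm]. split; [apply HP_in, HpP|exact Hpm].
  - rewrite HP_len in Hcount. lra.
Qed.

End Churn.

Lemma crashed_lt_survivors (alpha Delta nmin n0 ns r : R) :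
  0 <= nmin -> 0 <= Delta -> 1 < ((1 - alpha) ^ 3 - Delta * (1 + alpha) ^ 3) * nmin ->
  nmin <= n0 -> ns <= (1 + alpha) ^ 3 * n0 -> (1 - alpha) ^ 3 * n0 <= r ->
  Delta * ns < r.
Proof.
  intros Hnmin HDelta Hk Hn0 Hns Hr.
  set (k := (1 - alpha) ^ 3 - Delta * (1 + alpha) ^ 3) in Hk.
  assert (Hkpos : 0 < k) by nra.
  assert (k * nmin <= k * n0) by (apply Rmult_le_compat_l; lra).
  assert (Delta * ns <= Delta * ((1 + alpha) ^ 3 * n0)) by (apply Rmult_le_compat_l; lra).
  unfold k in *. lra.
Qed.

Theorem lemma3 (Node : Type) (init : Node -> Prop) (enter leave crash : Node -> option R)
  (N : R -> nat) (Nmin : nat) (D alpha Delta : R)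
  (HD : 0 < D)
  (Henter0 : forall p e, enter p = Some e -> 0 <= e)
  (Hleave0 : forall p l, leave p = Some l -> 0 <= l)
  (Hcrash0 : forall p c, crash p = Some c -> 0 <= c)
  (HN : forall t, 0 <= t -> is_card (fun p => present init enter leave p t) (N t))
  (HNmin : forall t, 0 <= t -> (Nmin <= N t)%nat)
  (Halpha0 : 0 <= alpha) (Halpha1 : alpha < 1)
  (HDelta0 : 0 <= Delta) (HDelta1 : Delta < 1)
  (Hchurn : forall t, 0 <= t ->
     forall l1 l2 : list Node, NoDup l1 -> NoDup l2 ->
     (forall p, In p l1 -> enters_during enter p t (t + D)) ->
     (forall p, In p l2 -> leaves_during leave p t (t + D)) ->
     INR (length l1 + length l2) <= alpha * INR (N t))
  (Hfail : forall t, 0 <= t ->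
     forall l : list Node, NoDup l ->
     (forall p, In p l -> present init enter leave p t /\ crashed_by crash p t) ->
     INR (length l) <= Delta * INR (N t))
  (Halpha : alpha <= 1 - Rpower 2 (- (1/4)))
  (HNmin1 : 1 < ((1 - alpha) ^ 3 - Delta * (1 + alpha) ^ 3) * INR Nmin) :
  forall t, 0 < t ->
  exists p : Node, forall s, Rmax 0 (t - 2 * D) <= s <= t + D ->
    active init enter leave crash p s.
Proof.
  intros t Ht.
  set (T0 := Rmax 0 (t - 2 * D)).
  assert (HT0 : 0 <= T0 /\ t - 2 * D <= T0 /\ T0 <= t)
    by (unfold T0, Rmax; destruct (Rle_dec 0 (t - 2 * D)); lra).
  destruct (long_lived_nodes Node init enter leave N D alpha ltac:(lra) Halpha0 ltac:(lra)
              HN Hchurn 3 T0 ltac:(lra)) as [l [Hl [Hlive Hcount]]].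
  { intros j Hj. apply (Rle_trans _ ((1 - alpha) ^ 4)); [apply half_le_pow4; lra|].
    apply pow_antimono_le1; lra || lia. }
  replace (T0 + INR 3 * D) with (T0 + 3 * D) in Hlive by (simpl; ring).
  pose proof (population_growth Node init enter leave N D alpha ltac:(lra) Halpha0 HN Hchurn
                3 T0 (t + D) ltac:(lra) ltac:(simpl; lra)) as Hgrowth.
  assert (Hthrough : forall p, In p l ->
            present init enter leave p T0 /\ present init enter leave p (t + D)).
  { intros p Hp. destruct (Hlive p Hp) as [Hp0 Hp3]. split; [exact Hp0|].
    apply (present_between init enter leave p T0 (t + D) (T0 + 3 * D)); auto; lra. }
  destruct (exists_uncrashed init enter leave crash N Delta (t + D) l
              (Hfail (t + D) ltac:(lra)) Hl) as [p [Hp Hnc]].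
  - intros p Hp. apply Hthrough, Hp.
  - apply (crashed_lt_survivors alpha Delta (INR Nmin) (INR (N T0)));
      [apply pos_INR|exact HDelta0|exact HNmin1|apply le_INR, HNmin; lra|exact Hgrowth|exact Hcount].
  - exists p. destruct (Hthrough p Hp) as [Hp0 HptD].
    exact (active_between init enter leave crash p T0 (t + D) Hp0 HptD Hnc).
Qed.
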